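(* Let $q<2$ with $q\neq 1$, let $r\in\mathbb{R}$, and let $a_1,\dots,a_n>0$, $b_1,\dots,b_n>0$. Then $$\left(\sum_{i=1}^n b_i^r\right)^{1-q}\sum_{i=1}^n a_i^r \ln_q\!\left(\frac{a_i^r}{b_i^r}\right)\ \geq\ \left(\sum_{i=1}^n a_i^r\right)\left\{\ln_q\!\left(\sum_{i=1}^n a_i^r\right)-\ln_q\!\left(\sum_{i=1}^n b_i^r\right)\right\}.$$
   Context: For $q\neq 1$ and $x>0$, the $q$-deformed logarithm is $\ln_q(x)=\dfrac{x^{1-q}-1}{1-q}$. *)

From HB Require Import structures.
From mathcomp Require Import all_boot all_order all_algebra.
From mathcomp Require Import all_classical all_reals all_analysis.
Set Implicit Arguments. Unset Strict Implicit. Unset Printing Implicit Defensive.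
Import Order.TTheory GRing.Theory Num.Theory.
Local Open Scope ring_scope.

Definition lnq {R : realType} (q x : R) : R := (x `^ (1 - q) - 1) / (1 - q).

From HB Require Import structures.
From mathcomp Require Import all_boot all_order all_algebra.
From mathcomp Require Import all_classical all_reals all_analysis.
From mathcomp Require Import ring lra.
Import Order.TTheory GRing.Theory Num.Theory.
Local Open Scope ring_scope.

(* Put x_i = a_i^r, y_i = b_i^r, A = sum x_i, B = sum y_i,
   p = 1 - q and t = p + 1 = 2 - q, so that t > 0 and t <> 1.  Unfolding
   ln_q, the difference (right side - left side) of the theorem equals
        B^p * (sum_i y_i (x_i/y_i)^t  -  B (A/B)^t) / p,
   so it suffices that the bracket has the sign of t - 1 = p.  This is the
   finite Jensen inequality for the power function w |-> w^t with weights
   y_i at the points x_i/y_i (whose weighted mean is A/B): convex for t >= 1,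
   concave for 0 <= t <= 1.  We prove it with tangent lines only:
   - the tangent-line inequality for u |-> u^t at u = 1, with the sign of
     t - 1 (weighted AM-GM from the concavity of ln, and Bernoulli's
     inequality obtained from it by inverting the exponent);
   - its rescaling to a tangent line at an arbitrary point c > 0;
   - summing the tangent inequalities at c = A/B with weights y_i, where the
     linear terms cancel because sum_i y_i (x_i/y_i) = A = B c. *)

Lemma powR_div (R : realType) (u v t : R) : 0 <= u -> 0 < v ->
  (u / v) `^ t = u `^ t / v `^ t.
Proof.
move=> u0 v0; rewrite powRM ?invr_ge0 ?(ltW v0) //.
by rewrite -powR_inv1 ?(ltW v0) // powRAC powR_inv1 // powR_ge0.
Qed.

Lemma powR_addr1 (R : realType) (w p : R) : 0 < w -> w `^ (p + 1) = w `^ p * w.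
Proof.
by move=> w0; rewrite powRD ?powRr1 ?(ltW w0) // (gt_eqF w0) implybT.
Qed.

(* Weighted AM-GM: for 0 <= t <= 1 the concave map u |-> u^t lies below its
   tangent line at 1; a consequence of the concavity of ln. *)
Lemma powR_le_tangent1 (R : realType) (t u : R) : 0 <= t -> t <= 1 -> 0 < u ->
  u `^ t <= 1 + t * (u - 1).
Proof.
move=> t0 t1 u0.
have := @concave_ln R (Itv01 t0 t1) u 1 u0 ltr01.
rewrite !convRE /= ln1 mulr0 addr0 mulr1 => ln_le.
have mean_gt0 : 0 < t * u + (1 - t).
  have [->|tn0] := eqVneq t 0; first by rewrite mul0r add0r subr0.
  by rewrite ltr_wpDr ?subr_ge0 // mulr_gt0 // lt_neqAle eq_sym tn0.
have -> : 1 + t * (u - 1) = t * u + (1 - t) by ring.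
by rewrite /powR gt_eqF // -(lnK mean_gt0) ler_expR.
Qed.

(* Bernoulli's inequality for real exponents t >= 1: the convex map u |-> u^t
   lies above its tangent line at 1.  Apply the previous lemma to u^t with
   the exponent 1/t. *)
Lemma powR_ge_tangent1 (R : realType) (t u : R) : 1 <= t -> 0 < u ->
  1 + t * (u - 1) <= u `^ t.
Proof.
move=> t1 u0; have t0 : 0 < t by apply: lt_le_trans t1.
have tV0 : 0 <= t^-1 by rewrite invr_ge0 ltW.
have tV1 : t^-1 <= 1 by rewrite invf_le1.
have := @powR_le_tangent1 _ _ _ tV0 tV1 (powR_gt0 t u0).
rewrite -powRrM mulfV ?gt_eqF // powRr1 ?(ltW u0) // => le_u.
have := ler_wpM2l (ltW t0) le_u.
have -> : t * (1 + t^-1 * (u `^ t - 1)) = t + u `^ t - 1.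
  by field; rewrite gt_eqF.
lra.
Qed.

Lemma powR_tangent1_sign (R : realType) (t u : R) : 0 <= t -> 0 < u ->
  0 <= (t - 1) * (u `^ t - (1 + t * (u - 1))).
Proof.
move=> t0 u0; have [t1|t1] := leP t 1.
  by rewrite mulr_le0 ?subr_le0 ?powR_le_tangent1.
by rewrite mulr_ge0 ?subr_ge0 ?powR_ge_tangent1 // ltW.
Qed.

(* The same sign property for the tangent line at an arbitrary point c > 0,
   obtained by rescaling u = w / c. *)
Lemma powR_tangent_sign (R : realType) (t w c : R) : 0 <= t -> 0 < w -> 0 < c ->
  0 <= (t - 1) * (w `^ t - c `^ t - t * c `^ t * (w / c - 1)).
Proof.
move=> t0 w0 c0; have ct0 := powR_gt0 t c0.
have := @powR_tangent1_sign _ _ _ t0 (divr_gt0 w0 c0).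
rewrite powR_div ?(ltW w0) // => sign1.
have -> : (t - 1) * (w `^ t - c `^ t - t * c `^ t * (w / c - 1))
        = c `^ t * ((t - 1) * (w `^ t / c `^ t - (1 + t * (w / c - 1)))).
  by field; rewrite !gt_eqF.
exact: mulr_ge0 (ltW ct0) sign1.
Qed.

Lemma sumr_ord_gt0 (R : numDomainType) n (z : 'I_n -> R) : (0 < n)%N ->
  (forall i, 0 < z i) -> 0 < \sum_(i < n) z i.
Proof.
move=> n0 z0; rewrite (bigD1 (Ordinal n0)) //=.
by rewrite ltr_wpDr ?z0 // sumr_ge0 // => i _; apply: ltW.
Qed.

Section WeightedPowerSums.
Variables (R : realType) (n : nat) (x y : 'I_n -> R).
Hypotheses (n_gt0 : (0 < n)%N) (x_gt0 : forall i, 0 < x i)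
  (y_gt0 : forall i, 0 < y i).

Let A := \sum_(i < n) x i.
Let B := \sum_(i < n) y i.

Lemma power_jensen_sign (t : R) : 0 <= t ->
  0 <= (t - 1) * (\sum_(i < n) y i * (x i / y i) `^ t - B * (A / B) `^ t).
Proof.
move=> t0; have A0 : 0 < A by exact: sumr_ord_gt0.
have B0 : 0 < B by exact: sumr_ord_gt0.
set c := A / B; have c0 : 0 < c by exact: divr_gt0.
pose gap i := (x i / y i) `^ t - c `^ t
  - t * c `^ t * ((x i / y i) / c - 1).
have gap_sum : \sum_(i < n) y i * (x i / y i) `^ t - B * c `^ t
             = \sum_(i < n) y i * gap i.
  have tangent_terms : \sum_(i < n) y i * (t * c `^ t * ((x i / y i) / c - 1))
                     = t * c `^ t * (A / c - B).
    rewrite (eq_bigr (fun i => t * c `^ t * (x i / c - y i))); last first.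
      by move=> i _; have := y_gt0 i => yi; field; rewrite !gt_eqF.
    by rewrite -mulr_sumr sumrB -mulr_suml.
  have A_c : A / c = B by rewrite /c; field; rewrite !gt_eqF.
  rewrite [RHS](eq_bigr (fun i => y i * (x i / y i) `^ t - (y i * c `^ t
      + y i * (t * c `^ t * ((x i / y i) / c - 1))))); last first.
    by move=> i _; rewrite /gap; ring.
  by rewrite sumrB big_split /= -mulr_suml tangent_terms A_c subrr !mulr0 addr0.
rewrite gap_sum mulr_sumr sumr_ge0 // => i _.
rewrite mulrCA mulr_ge0 ?(ltW (y_gt0 i)) //.
exact: @powR_tangent_sign _ _ _ _ t0 (divr_gt0 (x_gt0 i) (y_gt0 i)) c0.
Qed.

Lemma lnq_gap_identity (q : R) : q != 1 ->
  B `^ (1 - q) * \sum_(i < n) x i * lnq q (x i / y i) - A * (lnq q A - lnq q B)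
  = B `^ (1 - q) / (1 - q)
    * (\sum_(i < n) y i * (x i / y i) `^ (2 - q) - B * (A / B) `^ (2 - q)).
Proof.
move=> q1; have p0 : 1 - q != 0 by rewrite subr_eq0 eq_sym.
have A0 : 0 < A by exact: sumr_ord_gt0.
have B0 : 0 < B by exact: sumr_ord_gt0.
have t_succ : 2 - q = (1 - q) + 1 by ring.
have weighted_lnq : \sum_(i < n) x i * lnq q (x i / y i)
    = (\sum_(i < n) y i * (x i / y i) `^ (2 - q) - A) / (1 - q).
  rewrite /A -sumrB mulr_suml; apply: eq_bigr => i _.
  have xi := x_gt0 i; have yi := y_gt0 i.
  rewrite t_succ powR_addr1 ?divr_gt0 // /lnq.
  by field; rewrite p0 gt_eqF.
have mean_power : B `^ (1 - q) * (B * (A / B) `^ (2 - q)) = A * A `^ (1 - q).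
  rewrite powR_div ?(ltW A0) // t_succ !powR_addr1 //.
  have := powR_gt0 (1 - q) B0 => Bp.
  by field; rewrite !gt_eqF.
have lnq_diff : A * (lnq q A - lnq q B)
    = (A * A `^ (1 - q) - A * B `^ (1 - q)) / (1 - q).
  by rewrite /lnq; field.
by rewrite weighted_lnq lnq_diff -mean_power; field.
Qed.

End WeightedPowerSums.

Theorem mainTheorem3 (R : realType) (q r : R) (n : nat) (a b : 'I_n -> R) :
  q < 2 -> q != 1 -> (0 < n)%N ->
  (forall i, 0 < a i) -> (forall i, 0 < b i) ->
  (\sum_(i < n) a i `^ r) *
    (lnq q (\sum_(i < n) a i `^ r) - lnq q (\sum_(i < n) b i `^ r))
  <= (\sum_(i < n) b i `^ r) `^ (1 - q) *
     \sum_(i < n) (a i `^ r * lnq q (a i `^ r / b i `^ r)).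
Proof.
move=> q2 q1 n0 a0 b0.
pose x i := a i `^ r; pose y i := b i `^ r.
have x0 : forall i, 0 < x i by move=> i; exact: powR_gt0.
have y0 : forall i, 0 < y i by move=> i; exact: powR_gt0.
have t0 : 0 <= 2 - q by lra.
have := @power_jensen_sign _ _ _ _ n0 x0 y0 _ t0.
have -> : 2 - q - 1 = 1 - q by ring.
set gap := (\sum_(i < n) y i * _ - _) => p_gap.
rewrite -subr_ge0 (@lnq_gap_identity _ _ _ _ n0 x0 y0 _ q1) -/gap.
have -> : (\sum_(i < n) y i) `^ (1 - q) / (1 - q) * gap
        = (\sum_(i < n) y i) `^ (1 - q) * ((1 - q) * gap) / (1 - q) ^+ 2.
  by field; rewrite subr_eq0 eq_sym.
by rewrite divr_ge0 ?sqr_ge0 // mulr_ge0 // powR_ge0.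
Qed.
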